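(* Let $A\subseteq\mathbb{Z}_N$ be a $B_t[N;1]$ set which contains $0$, and let $S\triangleq A\setminus\{0\}$. Then $\mathbb{Z}_N \ge \{1\} \diamond_t S$.
   Context: A subset $A\subseteq\mathbb{Z}_N$ is a $B_t[N;1]$ set if the sums of any $t$ (not necessarily distinct) elements of $A$ are all different modulo $N$, i.e., distinct multisets of $t$ elements of $A$ have distinct sums in $\mathbb{Z}_N$. For a finite Abelian group $G$, a finite set $M\subseteq\mathbb{Z}\setminus\{0\}$ and $S=\{s_1,\dots,s_n\}\subseteq G$, we write $G\ge M\diamond_t S$ (“$M$ partially $t$-splits $G$ with splitter set $S$”) if the elements $\mathbf{e}\cdot(s_1,\dots,s_n)=\sum_i e_is_i$, over all $\mathbf{e}\in(M\cup\{0\})^n$ with $1\le\mathrm{wt}(\mathbf{e})\le t$, are all distinct and non-zero in $G$. Here $e_is_i$ denotes the $e_i$-fold group multiple and $\mathrm{wt}$ is the Hamming weight. *)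

From HB Require Import structures.
From mathcomp Require Import all_boot all_order all_algebra.
Set Implicit Arguments. Unset Strict Implicit. Unset Printing Implicit Defensive.
Import GRing.Theory.
Local Open Scope ring_scope.

(* A is a B_t[N;1] set in G (used with G = 'Z_N): the sums of any t
   (not necessarily distinct) elements of A are all different, i.e. two
   t-tuples of elements of A with equal sums are permutations of each other
   (= equal as multisets). *)
Definition Bt_set (G : finZmodType) (t : nat) (A : {set G}) : Prop :=
  forall x y : t.-tuple G,
    all (fun a => a \in A) x -> all (fun a => a \in A) y ->
    \sum_(a <- x) a = \sum_(a <- y) a -> perm_eq x y.

(* Coefficient vectors e indexed by the elements of S, with entries in
   M ∪ {0}; encoded as functions G -> int vanishing outside S. *)
Definition coef_vec (G : finZmodType) (M : seq int) (S : {set G})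
    (e : {ffun G -> int}) : Prop :=
  (forall s, s \in S -> (e s \in M) || (e s == 0)) /\
  (forall x, x \notin S -> e x = 0).

Definition wt (G : finZmodType) (S : {set G}) (e : {ffun G -> int}) : nat :=
  #|[set s in S | e s != 0]|.

Definition dotS (G : finZmodType) (S : {set G}) (e : {ffun G -> int}) : G :=
  \sum_(s in S) s *~ e s.

Definition partial_split (G : finZmodType) (M : seq int) (t : nat)
    (S : {set G}) : Prop :=
  (forall e, coef_vec M S e -> (1 <= wt S e <= t)%N -> dotS S e != 0) /\
  (forall e e', coef_vec M S e -> coef_vec M S e' ->
     (1 <= wt S e <= t)%N -> (1 <= wt S e' <= t)%N ->
     dotS S e = dotS S e' -> e = e').

From mathcomp Require Import all_boot all_order all_algebra.
Import GRing.Theory.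
Set Implicit Arguments. Unset Strict Implicit.

(* With M = {1}, a coefficient vector is the indicator of its support T, a
   subset of S = A \ {0} of size wt(e), and e . S is the sum of T.  Padding T
   with t - |T| zeros (this is where 0 \in A is needed) gives a t-multiset of
   elements of A with the same sum, so the B_t property forces subsets of S of
   size at most t to have distinct sums.  The empty subset has sum 0, hence
   nonempty ones have nonzero sums. *)

Local Open Scope ring_scope.

Definition supp (G : finZmodType) (S : {set G}) (e : {ffun G -> int}) : {set G} :=
  [set s in S | e s != 0].

Section BinaryVectors.

Variables (G : finZmodType) (S : {set G}).

Lemma coef_vec1E e s : coef_vec [:: 1%Z] S e -> e s = (e s != 0)%:R.
Proof.
case=> inS outS; have [sS | sS] := boolP (s \in S); last by rewrite outS.
by have := inS s sS; rewrite inE => /orP [] /eqP ->.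
Qed.

Lemma dotS_supp e :
  coef_vec [:: 1%Z] S e -> dotS S e = \sum_(s in supp S e) s.
Proof.
move=> he; rewrite /dotS (bigID (fun s => e s != 0)) /=.
rewrite [X in _ + X]big1 ?addr0 => [|s /andP [_]]; last first.
  by rewrite negbK => /eqP ->.
rewrite [RHS](eq_bigl (fun s => (s \in S) && (e s != 0))) => [|s]; last first.
  by rewrite inE.
by apply: eq_bigr => s /andP [_ nz_es]; rewrite (coef_vec1E s he) nz_es.
Qed.

Lemma coef_vec1_supp_inj e e' :
  coef_vec [:: 1%Z] S e -> coef_vec [:: 1%Z] S e' ->
  supp S e = supp S e' -> e = e'.
Proof.
move=> he he' /setP eq_supp; apply/ffunP => s.
have [sS | sS] := boolP (s \in S); last by rewrite he.2 ?he'.2.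
have := eq_supp s; rewrite !inE sS /= => eq_nz.
by rewrite (coef_vec1E s he) (coef_vec1E s he') eq_nz.
Qed.

End BinaryVectors.

Section DistinctSubsetSums.

Variables (G : finZmodType) (t : nat).

Definition pad0 (B : {set G}) : seq G := enum B ++ nseq (t - #|B|) 0.

Lemma size_pad0 (B : {set G}) : (#|B| <= t)%N -> size (pad0 B) = t.
Proof. by move=> Bt; rewrite size_cat size_nseq -cardE subnKC. Qed.

Lemma sum_pad0 (B : {set G}) : \sum_(a <- pad0 B) a = \sum_(s in B) s.
Proof.
rewrite big_cat /= big_enum [X in _ + X]big1_seq ?addr0 //.
by move=> a /andP [_ /nseqP []].
Qed.

Lemma filter_pad0 (B : {set G}) :
  0 \notin B -> [seq a <- pad0 B | a != 0] = enum B.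
Proof.
move=> B0; rewrite filter_cat filter_nseq eqxx cats0.
by apply/all_filterP/allP => a; rewrite mem_enum; apply: contraTneq => ->.
Qed.

Variable A : {set G}.
Hypotheses (BtA : Bt_set t A) (A0 : 0 \in A).

Lemma pad0_subset (B : {set G}) : B \subset A -> all [in A] (pad0 B).
Proof.
move=> /subsetP BA; apply/allP => a; rewrite mem_cat mem_enum.
by case/orP => [/BA | /nseqP [-> _]].
Qed.

Lemma Bt_set_perm (x y : seq G) : size x = t -> size y = t ->
  all [in A] x -> all [in A] y -> \sum_(a <- x) a = \sum_(a <- y) a ->
  perm_eq x y.
Proof.
move=> sx sy; have := @BtA (tcast sx (in_tuple x)) (tcast sy (in_tuple y)).
by rewrite !val_tcast.
Qed.

Lemma Bt_set_subset_sum_inj (B B' : {set G}) :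
  B \subset A :\ 0 -> B' \subset A :\ 0 -> (#|B| <= t)%N -> (#|B'| <= t)%N ->
  \sum_(s in B) s = \sum_(s in B') s -> B = B'.
Proof.
move=> /subsetD1P [BA B0] /subsetD1P [B'A B'0] Bt B't eq_sum.
have := Bt_set_perm (size_pad0 Bt) (size_pad0 B't) (pad0_subset BA)
  (pad0_subset B'A); rewrite !sum_pad0 => /(_ eq_sum).
move=> /(perm_filter (fun a => a != 0)).
rewrite !filter_pad0 // => /perm_mem eqB.
by apply/setP => a; rewrite -mem_enum eqB mem_enum.
Qed.

Lemma Bt_set_partial_split : partial_split [:: 1%Z] t (A :\ 0).
Proof.
have suppS e : supp (A :\ 0) e \subset A :\ 0.
  by apply/subsetP => s; rewrite inE => /andP [].
split=> [e he /andP [wt_gt0 wt_le_t] |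
         e e' he he' /andP [_ wt_le_t] /andP [_ wt'_le_t]].
  apply: contraTneq wt_gt0 => dot0; rewrite /wt -/(supp _ e).
  rewrite (Bt_set_subset_sum_inj (suppS e) (sub0set _)) ?cards0 //.
  by rewrite -dotS_supp // dot0 big_set0.
rewrite !dotS_supp // => eq_dot; apply: (coef_vec1_supp_inj he he').
exact: Bt_set_subset_sum_inj (suppS e) (suppS e') wt_le_t wt'_le_t eq_dot.
Qed.

End DistinctSubsetSums.

Theorem theorem8 (N t : nat) (hN : (1 < N)%N) (A : {set 'Z_N}) :
  Bt_set t A -> (0%R : 'Z_N) \in A ->
  partial_split [:: 1%Z] t (A :\ (0%R : 'Z_N)).
Proof. exact: Bt_set_partial_split. Qed.
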